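(* In the setting of the controlled system $\dot g=T_eR_g(\xi)$, $\dot\xi+\sharp[\mathrm{ad}^*_\xi\flat(\xi)]=\sum_a u^af_a$ with $\mathfrak{g}=\mathfrak{d}\oplus\mathfrak{f}$, let $u^*$ be the unique control law making $\mathfrak{d}$ a virtual nonholonomic constraint. Then every solution $\xi(t)$ of the closed-loop system with $\xi(0)\in\mathfrak{d}$ satisfies $$\dot\xi+\nabla^{\mathfrak{c}}_\xi\xi=0,$$ where $\nabla^{\mathfrak{c}}$ is the induced constrained connection; and $\mathfrak{d}$ is geodesically invariant for $\nabla^{\mathfrak{c}}$, i.e. solutions of $\dot\xi+\nabla^{\mathfrak{c}}_\xi\xi=0$ with $\xi(0)\in\mathfrak{d}$ remain in $\mathfrak{d}$.
   Context: $G$ is an $n$-dimensional Lie group with Lie algebra $\mathfrak{g}=T_eG$, an inner product $\langle\cdot,\cdot\rangle$ on $\mathfrak{g}$ inducing a right-invariant metric on $G$ with Levi-Civita connection $\nabla$; $R_g(h)=hg$, $\xi_R(g)=T_eR_g\xi$. $\flat(\xi)(\eta)=\langle\xi,\eta\rangle$, $\sharp=\flat^{-1}$, $\mathrm{ad}^*_\xi$ dual of $\mathrm{ad}_\xi=[\xi,\cdot]$. $f_1,\dots,f_m\in\mathfrak{g}$ are linearly independent spanning $\mathfrak{f}$, $\mathfrak{d}$ is a subspace with $\mathfrak{g}=\mathfrak{d}\oplus\mathfrak{f}$, with projections $\mathfrak{p}:\mathfrak{g}\to\mathfrak{d}$, $\mathfrak{q}:\mathfrak{g}\to\mathfrak{f}$.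 The control law $u^*(\xi)=(\tau^1(\xi),\dots,\tau^m(\xi))$ is defined by $\sharp[\mathrm{ad}^*_\xi\flat(\xi)]=\eta(\xi)+\sum_b\tau^b(\xi)f_b$ with $\eta(\xi)\in\mathfrak{d}$. The Riemannian $\mathfrak{g}$-connection is $\nabla^{\mathfrak{g}}_\xi\eta:=(\nabla_{\xi_R}\eta_R)(e)$, and the induced constrained connection is $\nabla^{\mathfrak{c}}_\xi\eta:=\nabla^{\mathfrak{g}}_\xi\eta+\nabla^{\mathfrak{g}}_\xi(\mathfrak{q}(\eta))-\mathfrak{q}(\nabla^{\mathfrak{g}}_\xi\eta)$. *)

From HB Require Import structures.
From mathcomp Require Import all_boot all_order all_algebra.
From mathcomp Require Import all_classical all_reals all_analysis.
Set Implicit Arguments. Unset Strict Implicit. Unset Printing Implicit Defensive.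
Import Order.TTheory GRing.Theory Num.Theory.
Import numFieldNormedType.Exports.
Local Open Scope ring_scope.

(* The Lie algebra g = T_e G is modelled as 'rV[R]_n, with bracket [br].   *)

Section LieDefs.
Variables (R : realType) (n : nat).
Implicit Types (x y z : 'rV[R]_n).

Definition ip (M : 'M[R]_n) x y : R := (x *m M *m y^T) 0 0.

(* flat : g -> g^*, covectors are represented as functions g -> R *)
Definition flat (M : 'M[R]_n) x : 'rV[R]_n -> R := fun y => ip M x y.

Definition adstar (br : 'rV[R]_n -> 'rV[R]_n -> 'rV[R]_n) x
  (phi : 'rV[R]_n -> R) : 'rV[R]_n -> R := fun z => phi (br x z).

(* sharp = flat^{-1} on linear functionals: the w with <w, z> = phi z *)
Definition sharp (M : 'M[R]_n) (phi : 'rV[R]_n -> R) : 'rV[R]_n :=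
  (\row_j phi (delta_mx 0 j)) *m invmx M.

Definition is_lie_bracket (br : 'rV[R]_n -> 'rV[R]_n -> 'rV[R]_n) : Prop :=
  [/\ (forall (a : R) x y z, br (a *: x + y) z = a *: br x z + br y z),
      (forall x y, br x y = - br y x) &
      (forall x y z, br x (br y z) + br y (br z x) + br z (br x y) = 0)].

Definition is_inner_product (M : 'M[R]_n) : Prop :=
  M^T = M /\ (forall x, x != 0 -> 0 < ip M x x).

(* The Riemannian g-connection nabla^g_xi eta := (nabla_{xi_R} eta_R)(e)   *)
(* of the Levi-Civita connection of the right-invariant metric: it is      *)
(* characterised by torsion-freeness and metric compatibility on           *)
(* right-invariant vector fields, using [xi_R, eta_R] = -[xi, eta]_R and   *)
(* the constancy of <eta_R, zeta_R>.                                        *)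
Definition is_riemannian_g_connection (br : 'rV[R]_n -> 'rV[R]_n -> 'rV[R]_n)
  (M : 'M[R]_n) (nab : 'rV[R]_n -> 'rV[R]_n -> 'rV[R]_n) : Prop :=
  (forall x y, nab x y - nab y x = - br x y) /\
  (forall x y z, ip M (nab x y) z + ip M y (nab x z) = 0).

(* induced constrained connection, q = projection onto f along d *)
Definition nabla_c (nab : 'rV[R]_n -> 'rV[R]_n -> 'rV[R]_n)
  (q : 'rV[R]_n -> 'rV[R]_n) x y : 'rV[R]_n :=
  nab x y + nab x (q y) - q (nab x y).

End LieDefs.

From HB Require Import structures.
From mathcomp Require Import all_boot all_order all_algebra.
From mathcomp Require Import all_classical all_reals all_analysis.
From mathcomp Require Import ring lra.
Set Implicit Arguments.
Unset Strict Implicit.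
Unset Printing Implicit Defensive.

Import Order.TTheory GRing.Theory Num.Theory.
Import numFieldNormedType.Exports.
Local Open Scope ring_scope.

(* Metric compatibility and torsion-freeness make nabla^g bilinear and give
   nabla^g_xi xi = sharp[ad^*_xi flat xi], so the control law says that
   q(nabla^g_xi xi) = sum_b tau^b(xi) f_b, where q is the projection onto f
   along d.  Applying q to either equation of motion, the component y = q(xi)
   solves a linear equation y' = B(xi, y) with B bilinear: y' = 0 along the
   closed loop, and y' = -q(nabla^g_xi y) along the geodesics of nabla^c,
   because q is idempotent.  Since y(0) = 0, a Gronwall estimate on
   sum_l y_l^2 forces y = 0, so xi stays in d; along the closed loop this
   turns the equation of motion into xi' + nabla^c_xi xi = 0. *)

Lemma linear_row_expand {R : pzRingType} {n} {V : lmodType R} {L : 'rV[R]_n -> V} z :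
  linear L -> L z = \sum_j z 0 j *: L (delta_mx 0 j).
Proof.
move=> linL.
pose L' : {linear 'rV[R]_n -> V} := HB.pack L (GRing.isLinear.Build _ _ _ _ L linL).
rewrite {1}(row_sum_delta z) -[LHS]/(L' _) linear_sum.
by apply: eq_bigr => j _; rewrite linearZ.
Qed.

Section InnerProduct.
Variables (R : realType) (n : nat) (M : 'M[R]_n).
Implicit Types (x y z : 'rV[R]_n).

Lemma ipPl (a : R) x y z : ip M (a *: x + y) z = a * ip M x z + ip M y z.
Proof. by rewrite /ip !mulmxDl -!scalemxAl !mxE. Qed.

Lemma ipPr (a : R) x y z : ip M x (a *: y + z) = a * ip M x y + ip M x z.
Proof. by rewrite /ip linearP mulmxDr -scalemxAr !mxE. Qed.

Lemma ipBl x y z : ip M (x - y) z = ip M x z - ip M y z.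
Proof. by rewrite addrC -scaleN1r ipPl mulN1r addrC. Qed.

Lemma ipBr x y z : ip M x (y - z) = ip M x y - ip M x z.
Proof. by rewrite addrC -scaleN1r ipPr mulN1r addrC. Qed.

Lemma ip0l z : ip M 0 z = 0.
Proof. by rewrite /ip !mul0mx mxE. Qed.

Hypothesis ipM : is_inner_product M.

Lemma ipC x y : ip M x y = ip M y x.
Proof.
case: ipM => MT _; rewrite /ip; transitivity ((x *m M *m y^T)^T 0 0).
  by rewrite [RHS]mxE.
by rewrite !trmx_mul trmxK MT mulmxA.
Qed.

Lemma ip_inj x y : (forall z, ip M x z = ip M y z) -> x = y.
Proof.
case: ipM => _ pos xy; apply/eqP; rewrite -subr_eq0; apply: contraT => /pos.
by rewrite ipBl xy subrr ltxx.
Qed.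

Lemma inner_product_unitmx : M \in unitmx.
Proof.
case: ipM => _ pos; rewrite unitmxE unitfE; apply/negP => /det0P [v /pos].
by rewrite /ip => + vM; rewrite vM mul0mx mxE ltxx.
Qed.

Lemma ip_sharp (phi : 'rV[R]_n -> R^o) z : linear phi -> ip M (sharp M phi) z = phi z.
Proof.
move=> linphi; rewrite /ip /sharp mulmxKV ?inner_product_unitmx //.
rewrite (linear_row_expand z linphi) mxE.
by apply: eq_bigr => j _; rewrite !mxE mulrC.
Qed.

End InnerProduct.

Section MatrixCalculus.
Variable R : realType.

Lemma is_derive_entry {m p} {A : R -> 'M[R]_(m, p)} {s} i j :
  derivable A s 1 -> is_derive s 1 (fun r => A r i j) ('D_1 A s i j).
Proof.
move=> dA; rewrite (derive_mx dA) mxE; apply: derivableP.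
exact: (derivable_mxP _ _ _).1 dA i j.
Qed.

Lemma is_derive_mulmxr m p q (A : R -> 'M[R]_(m, p)) (P : 'M[R]_(p, q)) s :
  derivable A s 1 -> is_derive s 1 (fun r => A r *m P) ('D_1 A s *m P).
Proof.
move=> dA.
have entry i j : is_derive s 1 (fun r => (A r *m P) i j) (('D_1 A s *m P) i j).
  have -> : (fun r => (A r *m P) i j) = \sum_k (P k j \*: (fun r => A r i k)).
    by apply/funext => r; rewrite fct_sumE mxE; apply: eq_bigr => k _; rewrite mulrC.
  apply: is_derive_eq.
    by apply: is_derive_sum => k; apply: is_deriveZ; exact: is_derive_entry.
  by rewrite mxE; apply: eq_bigr => k _; rewrite mulrC.
have dAP : derivable (fun r => A r *m P) s 1.
  by apply/derivable_mxP => i j; have [] := entry i j.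
apply: DeriveDef => //; rewrite (derive_mx dAP); apply/matrixP => i j.
by rewrite mxE; have [_ ->] := entry i j.
Qed.

Lemma is_derive_sum_sqr m (y : R -> 'rV[R]_m) s : derivable y s 1 ->
  is_derive s 1 (fun r => \sum_l y r 0 l ^+ 2) (\sum_l 2 * y s 0 l * 'D_1 y s 0 l).
Proof.
move=> dy; have -> : (fun r => \sum_l y r 0 l ^+ 2) = \sum_l (fun r => y r 0 l ^+ 2).
  by apply/funext => r; rewrite fct_sumE.
apply: is_derive_sum => l.
by have := is_deriveX 2 (is_derive_entry 0 l dy); rewrite expr1 /GRing.scale.
Qed.

Lemma mx_entry_norm_le {m p} (A : 'M[R]_(m, p)) i j : `|A i j| <= `|A|.
Proof.
by rewrite [leRHS]/Num.Def.normr /= mx_normrE; exact: (le_bigmax _ _ (i, j)).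
Qed.

Lemma norm_row_sqr_le {n} (y : 'rV[R]_n) : `|y| ^+ 2 <= \sum_l y 0 l ^+ 2.
Proof.
have sum_ge0 : 0 <= \sum_l y 0 l ^+ 2 by apply: sumr_ge0 => l _; exact: sqr_ge0.
rewrite -(sqr_sqrtr sum_ge0) ler_sqr ?nnegrE ?sqrtr_ge0 //.
rewrite [leLHS]/Num.Def.normr /= mx_normrE; apply: bigmax_le => [|[i l] _] /=.
  exact: sqrtr_ge0.
rewrite ord1 -sqrtr_sqr ler_wsqrtr // (bigD1 l) //= lerDl.
by apply: sumr_ge0 => ? _; exact: sqr_ge0.
Qed.

Lemma norm_dot_le_sum_sqr {n} (y z : 'rV[R]_n) K :
  0 <= K -> `|z| <= K * `|y| ->
  `|\sum_l 2 * y 0 l * z 0 l| <= 2 * n%:R * K * \sum_l y 0 l ^+ 2.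
Proof.
move=> K0 zy; apply: le_trans (ler_norm_sum _ _ _) _.
apply: (@le_trans _ _ (\sum_(l < n) 2 * K * `|y| ^+ 2)).
  apply: ler_sum => l _; rewrite !normrM normr_nat.
  have := mx_entry_norm_le y 0 l; have := le_trans (mx_entry_norm_le z 0 l) zy.
  by have := normr_ge0 (y 0 l); have := normr_ge0 (z 0 l); nra.
rewrite sumr_const card_ord -[_ *+ n]mulr_natl.
have -> : n%:R * (2 * K * `|y| ^+ 2) = 2 * n%:R * K * `|y| ^+ 2 by ring.
by rewrite ler_wpM2l ?norm_row_sqr_le // !mulr_ge0.
Qed.

Lemma is_derive_mul_expR (g : R -> R) k s : derivable g s 1 ->
  is_derive s 1 (fun r => g r * expR (k * r)) (expR (k * s) * ('D_1 g s + k * g s)).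
Proof.
move=> dg.
have dexp : is_derive s 1 (fun r => expR (k * r)) (expR (k * s) * k).
  apply: (is_derive1_comp (is_derive_expR _)).
  by have := is_deriveZ k (is_derive_id s 1); rewrite /GRing.scale /= mulr1.
apply: is_derive_eq; first exact: is_deriveM (derivableP dg) dexp.
by rewrite /GRing.scale /=; ring.
Qed.

Lemma gronwall_zero (g : R -> R) (K u v : R) :
  0 \in `[u, v] ->
  {in `[u, v], forall t, derivable g t 1} ->
  {in `[u, v], forall t, 0 <= g t} ->
  {in `[u, v], forall t, `|'D_1 g t| <= K * g t} ->
  g 0 = 0 -> {in `[u, v], forall t, g t = 0}.
Proof.
move=> uv0 dg g_ge0 dgK g0 t tuv.
move: (uv0) (tuv); rewrite !in_itv /= => /andP[u0 v0] /andP[ut tv].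
pose h k r := g r * expR (k * r).
have sub_uv p q r : u <= p -> q <= v -> r \in `[p, q] -> r \in `[u, v].
  move=> up qv; rewrite !in_itv /= => /andP[pr rq].
  by rewrite (le_trans up pr) (le_trans rq qv).
have dh (k p q : R) : u <= p -> q <= v -> {in `]p, q[, forall r : R,
    is_derive r 1 (h k) (expR (k * r) * ('D_1 g r + k * g r))}.
  move=> up qv r rpq; apply/is_derive_mul_expR/dg/(sub_uv p q) => //.
  exact: subset_itv_oo_cc.
have ch (k p q : R) : u <= p -> q <= v -> {within `[p, q], continuous (h k)}%classic.
  move=> up qv; apply: derivable_within_continuous => r rpq.
  by have [] := is_derive_mul_expR k (dg r (sub_uv p q r up qv rpq)).
(* |g'| <= K g makes h (- K) nonincreasing and h K nondecreasing. *)
have [k hkt] : exists k, h k t <= 0.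
  have [t0|t0] := leP 0 t.
  - exists (- K).
    have [c /(sub_uv 0 t _ u0 tv) cuv] :=
      MVT_segment t0 (dh (- K) 0 t u0 tv) (ch (- K) 0 t u0 tv).
    rewrite /h g0 mul0r subr0 => ->.
    rewrite mulr_le0_ge0 ?subr0 // pmulr_rle0 ?expR_gt0 //.
    by have := ler_norm ('D_1 g c); have := dgK c cuv; lra.
  - exists K.
    have [c /(sub_uv t 0 _ ut v0) cuv] :=
      MVT_segment (ltW t0) (dh K t 0 ut v0) (ch K t 0 ut v0).
    rewrite /h g0 mul0r sub0r => /eqP; rewrite eqr_oppLR => /eqP ->.
    rewrite oppr_le0 sub0r; apply: mulr_ge0; last by rewrite oppr_ge0 ltW.
    by rewrite pmulr_rge0 ?expR_gt0 //; have := lerNnormlW (dgK c cuv); lra.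
apply/eqP; rewrite eq_le g_ge0 // andbT.
by move: hkt; rewrite /h pmulr_lle0 ?expR_gt0.
Qed.

End MatrixCalculus.

Section LinearODE.
Variables (R : realType) (n : nat) (B : 'rV[R]_n -> 'rV[R]_n -> 'rV[R]_n).
Hypotheses (linBl : forall y, linear (B^~ y)) (linBr : forall x, linear (B x)).

Lemma bilinear_norm_le : exists2 C, 0 <= C & forall x y, `|B x y| <= C * `|x| * `|y|.
Proof.
pose e (k : 'I_n) : 'rV[R]_n := delta_mx 0 k.
exists (\sum_k \sum_l `|B (e k) (e l)|); first by do 2!(apply: sumr_ge0 => ? _).
move=> x y.
have -> : B x y = \sum_k \sum_l (x 0 k * y 0 l) *: B (e k) (e l).
  rewrite (linear_row_expand x (linBl y)); apply: eq_bigr => k _.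
  rewrite (linear_row_expand y (linBr (e k))) scaler_sumr.
  by apply: eq_bigr => l _; rewrite scalerA.
rewrite !mulr_suml; apply: le_trans (ler_norm_sum _ _ _) _; apply: ler_sum => k _.
rewrite !mulr_suml; apply: le_trans (ler_norm_sum _ _ _) _; apply: ler_sum => l _.
rewrite normrZ normrM mulrC -mulrA ler_wpM2l //.
by apply: ler_pM => //; exact: mx_entry_norm_le.
Qed.

Lemma linear_ode_zero (a c : R) (x y : R -> 'rV[R]_n) :
  0 \in `]a, c[ ->
  {in `]a, c[, continuous x} ->
  {in `]a, c[, forall t, derivable y t 1} ->
  {in `]a, c[, forall t, 'D_1 y t = B (x t) (y t)} ->
  y 0 = 0 -> {in `]a, c[, forall t, y t = 0}.
Proof.
move=> ac0 cx dy ode y0 t tac.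
pose u := Num.min 0 t; pose v := Num.max 0 t.
have uv0 : 0 \in `[u, v] by rewrite in_itv /= ge_min le_max !lexx.
have in_ac s : s \in `[u, v] -> s \in `]a, c[.
  move: ac0 tac; rewrite !in_itv /= => /andP[a0 c0] /andP[a_t t_c] /andP[us sv].
  by rewrite (lt_le_trans _ us) ?(le_lt_trans sv) // ?lt_min ?gt_max ?a0 ?a_t ?c0 ?t_c.
have [s0 _ xmax] :
    exists2 s0, s0 \in `[u, v] & {in `[u, v], forall s, `|x s| <= `|x s0|}.
  apply: EVT_max; first by move: uv0; rewrite in_itv /= => /andP[]; exact: le_trans.
  apply: continuous_in_subspaceT => s /[!inE] suv.
  by apply: continuous_comp; [exact: cx (in_ac s suv) | exact: norm_continuous].
have [C C0 normB] := bilinear_norm_le.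
pose g s := \sum_l y s 0 l ^+ 2.
have g_ge0 s : 0 <= g s by apply: sumr_ge0 => l _; exact: sqr_ge0.
have dg s : s \in `[u, v] -> is_derive s 1 g (\sum_l 2 * y s 0 l * 'D_1 y s 0 l).
  by move=> /in_ac /dy; exact: is_derive_sum_sqr.
have dgK s : s \in `[u, v] -> `|'D_1 g s| <= 2 * n%:R * (C * `|x s0|) * g s.
  move=> suv; have [_ ->] := dg s suv; apply: norm_dot_le_sum_sqr.
    exact: mulr_ge0.
  rewrite ode ?in_ac //; apply: le_trans (normB _ _) _.
  by rewrite ler_wpM2r // ler_wpM2l // xmax.
have gt : g t = 0.
  apply: (@gronwall_zero _ g (2 * n%:R * (C * `|x s0|)) u v uv0) => //.
  - by move=> s suv; have [] := dg s suv.
  - by rewrite /g; apply: big1 => l _; rewrite y0 mxE expr0n.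
  - by rewrite in_itv /= ge_min le_max !lexx !orbT.
apply/rowP => l; rewrite mxE; apply/eqP; rewrite -sqrf_eq0; apply/eqP.
by apply: (psumr_eq0P (fun l _ => sqr_ge0 (y t 0 l)) gt).
Qed.

Lemma linear_ode_mulmx_zero (a c : R) (xi : R -> 'rV[R]_n) (P : 'M[R]_n) :
  a < 0 < c ->
  (forall t, a < t < c -> derivable xi t 1) ->
  (forall t, a < t < c -> 'D_1 xi t *m P = B (xi t) (xi t *m P)) ->
  xi 0 *m P = 0 -> forall t, a < t < c -> xi t *m P = 0.
Proof.
move=> ac0 dxi ode xi0 t tac.
have in_ac s : (s \in `]a, c[) = (a < s < c) by rewrite in_itv.
have cxi : {in `]a, c[, continuous xi}.
  by move=> s; rewrite in_ac => /dxi /derivable1_diffP /differentiable_continuous.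
have dy s : s \in `]a, c[ -> is_derive s 1 (fun r => xi r *m P) ('D_1 xi s *m P).
  by rewrite in_ac => /dxi /(is_derive_mulmxr P).
apply: (linear_ode_zero (y := fun r => xi r *m P) _ cxi _ _ xi0); rewrite ?in_ac.
- exact: ac0.
- by move=> s /dy [].
- by move=> s sac; have [_ ->] := dy s sac; apply: ode; rewrite -in_ac.
- exact: tac.
Qed.

End LinearODE.

Section LeviCivita.
Variables (R : realType) (n : nat) (br : 'rV[R]_n -> 'rV[R]_n -> 'rV[R]_n)
  (M : 'M[R]_n) (nab : 'rV[R]_n -> 'rV[R]_n -> 'rV[R]_n).
Hypotheses (lie : is_lie_bracket br) (ipM : is_inner_product M)
  (levi : is_riemannian_g_connection br M nab).
Implicit Types (x y z : 'rV[R]_n).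

Lemma lie_bracket_linear_r x : linear (br x).
Proof. by case: lie => linl anti _ a y z; rewrite anti linl opprD -scalerN -!anti. Qed.

Lemma nab_torsion x y : nab x y = nab y x - br x y.
Proof. by case: levi => torsion _; rewrite -torsion addrC subrK. Qed.

Lemma ip_nab_l x y z : ip M (nab x y) z = - ip M y (nab x z).
Proof. by case: levi => _ metric; apply/eqP; rewrite -addr_eq0 metric. Qed.

Lemma ip_nab_self x z : ip M x (nab z x) = 0.
Proof. by have := ip_nab_l z x x; rewrite (ipC ipM); lra. Qed.

Lemma nab_linear_r x : linear (nab x).
Proof.
by move=> a y y'; apply: (ip_inj ipM) => z; rewrite ipPl !ip_nab_l ipPl; ring.
Qed.

Lemma nab_linear_l y : linear (nab^~ y).
Proof.
case: lie => linl _ _ a x x'.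
by rewrite /= !(nab_torsion _ y) nab_linear_r linl scalerBr opprD addrACA.
Qed.

Lemma nab0r x : nab x 0 = 0.
Proof. by apply: (ip_inj ipM) => z; rewrite ip_nab_l !ip0l oppr0. Qed.

Lemma nab_self x : nab x x = sharp M (adstar br x (flat M x)).
Proof.
apply: (ip_inj ipM) => z; rewrite ip_sharp //; last first.
  by move=> a y y'; rewrite /adstar /flat lie_bracket_linear_r ipPr.
by rewrite /adstar /flat ip_nab_l (nab_torsion x z) ipBr ip_nab_self sub0r opprK.
Qed.

End LeviCivita.

Lemma nabla_c_mulmx_idem {R : realType} {n} (nab : 'rV[R]_n -> 'rV[R]_n -> 'rV[R]_n)
    (P : 'M[R]_n) x y :
  P *m P = P -> nabla_c nab (fun v => v *m P) x y *m P = nab x (y *m P) *m P.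
Proof.
by move=> PP; rewrite /nabla_c !mulmxDl mulNmx -mulmxA PP addrAC subrr add0r.
Qed.

Section DirectSumProjection.
Variables (K : fieldType) (n k : nat) (D : 'M[K]_n) (F : 'M[K]_(k, n)).
Hypotheses (DF0 : (D :&: F == (0 : 'M[K]_n))%MS) (DF1 : (D + F == (1%:M : 'M[K]_n))%MS).
Local Notation P := (proj_mx <<F>>%MS D).
Implicit Types w : 'rV[K]_n.

Lemma genF_capD_eq0 : (<<F>> :&: D)%MS = 0.
Proof.
rewrite capmxC; apply/eqmx0P; rewrite (cap_eqmx (eqmx_refl D) (genmxE F)).
by apply/andP; split; [case/andP: DF0 | exact: sub0mx].
Qed.

Lemma projF_id w : (w <= F)%MS -> w *m P = w.
Proof. by move=> wF; apply: proj_mx_id genF_capD_eq0 _; rewrite genmxE. Qed.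

Lemma projF_eq0 w : (w *m P == 0) = (w <= D)%MS.
Proof.
apply/eqP/idP => [wP0 | /(proj_mx_0 genF_capD_eq0) //].
have wFD : (w <= <<F>> + D)%MS.
  by rewrite addsmxC (adds_eqmx (eqmx_refl D) (genmxE F)) (eqmxP DF1) submx1.
by have := proj_mx_compl_sub wFD; rewrite wP0 subr0.
Qed.

Lemma projF_idem : P *m P = P.
Proof. exact: proj_mx_proj genF_capD_eq0. Qed.

End DirectSumProjection.

Section VirtualConstraint.
Variables (R : realType) (n m : nat) (br : 'rV[R]_n -> 'rV[R]_n -> 'rV[R]_n)
  (M : 'M[R]_n) (nab : 'rV[R]_n -> 'rV[R]_n -> 'rV[R]_n)
  (f : 'I_m -> 'rV[R]_n) (D : 'M[R]_n) (tau : 'rV[R]_n -> 'I_m -> R).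
Hypotheses (lie : is_lie_bracket br) (ipM : is_inner_product M)
  (levi : is_riemannian_g_connection br M nab).
Local Notation F := (\matrix_(b < m) f b).
Hypotheses (DF0 : (D :&: F == (0 : 'M[R]_n))%MS) (DF1 : (D + F == (1%:M : 'M[R]_n))%MS).
Hypothesis tauP : forall xi,
  (sharp M (adstar br xi (flat M xi)) - \sum_(b < m) tau xi b *: f b <= D)%MS.
Local Notation P := (proj_mx <<F>>%MS D).
Local Notation u x := (\sum_(b < m) tau x b *: f b).

Lemma control_sub_F x : (u x <= F)%MS.
Proof.
apply: summx_sub => b _; apply: scalemx_sub.
by apply: (eq_row_sub b); rewrite rowK.
Qed.

Lemma nab_self_projF x : nab x x *m P = u x.
Proof.
have := tauP x; rewrite -(projF_eq0 DF0 DF1) -(nab_self lie ipM levi) mulmxBl.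
by rewrite (projF_id DF0 (control_sub_F x)) subr_eq0 => /eqP.
Qed.

Lemma closed_loop_geodesic (a c : R) (xi : R -> 'rV[R]_n) :
  a < 0 < c -> (forall t, a < t < c -> derivable xi t 1) ->
  (forall t, a < t < c ->
     'D_1 xi t + sharp M (adstar br (xi t) (flat M (xi t))) = u (xi t)) ->
  (xi 0 <= D)%MS ->
  forall t, a < t < c -> 'D_1 xi t + nabla_c nab (fun v => v *m P) (xi t) (xi t) = 0.
Proof.
move=> ac0 dxi loop xi0D t tac.
have xi' s : a < s < c -> 'D_1 xi s = u (xi s) - nab (xi s) (xi s).
  by move=> sac; rewrite (nab_self lie ipM levi) -(loop s sac) addrK.
have xitD : xi t *m P = 0.
  apply: (@linear_ode_mulmx_zero _ _ (fun _ _ => 0) _ _ a c) => //.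
  - by move=> y a' x x'; rewrite scaler0 addr0.
  - by move=> x a' y y'; rewrite scaler0 addr0.
  - move=> s sac; rewrite xi' // mulmxBl nab_self_projF.
    by rewrite (projF_id DF0 (control_sub_F _)) subrr.
  - by apply/eqP; rewrite (projF_eq0 DF0 DF1).
rewrite /nabla_c xitD (nab0r ipM levi) addr0 nab_self_projF xi' //.
by rewrite addrA subrK subrr.
Qed.

Lemma constraint_geodesically_invariant (a c : R) (xi : R -> 'rV[R]_n) :
  a < 0 < c -> (forall t, a < t < c -> derivable xi t 1) ->
  (forall t, a < t < c ->
     'D_1 xi t + nabla_c nab (fun v => v *m P) (xi t) (xi t) = 0) ->
  (xi 0 <= D)%MS ->
  forall t, a < t < c -> (xi t <= D)%MS.
Proof.
move=> ac0 dxi geod xi0D t tac; rewrite -(projF_eq0 DF0 DF1); apply/eqP.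
apply: (@linear_ode_mulmx_zero _ _ (fun x y => - (nab x y *m P)) _ _ a c) => //.
- move=> y k x x'; rewrite /= (nab_linear_l lie ipM levi).
  by rewrite mulmxDl -scalemxAl scalerN opprD.
- move=> x k y y'; rewrite /= (nab_linear_r ipM levi).
  by rewrite mulmxDl -scalemxAl scalerN opprD.
- move=> s sac; have /eqP := geod s sac; rewrite addr_eq0 => /eqP ->.
  by rewrite mulNmx nabla_c_mulmx_idem // (projF_idem DF0).
- by apply/eqP; rewrite (projF_eq0 DF0 DF1).
Qed.

End VirtualConstraint.

Theorem mainTheorem12 (R : realType) (n m : nat)
  (br : 'rV[R]_n -> 'rV[R]_n -> 'rV[R]_n) (M : 'M[R]_n)
  (nab : 'rV[R]_n -> 'rV[R]_n -> 'rV[R]_n)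
  (f : 'I_m -> 'rV[R]_n) (D : 'M[R]_n)
  (tau : 'rV[R]_n -> 'I_m -> R) :
  is_lie_bracket br ->
  is_inner_product M ->
  is_riemannian_g_connection br M nab ->
  (* f_1, ..., f_m linearly independent, spanning F *)
  row_free (\matrix_(b < m) f b) ->
  (* g = d (+) f *)
  ((D :&: \matrix_(b < m) f b)%MS == (0 : 'M[R]_n))%MS ->
  ((D + \matrix_(b < m) f b)%MS == (1%:M : 'M[R]_n))%MS ->
  (* u^* : sharp[ad^*_xi flat xi] = eta(xi) + sum_b tau^b(xi) f_b, eta(xi) in d *)
  (forall xi : 'rV[R]_n,
     (sharp M (adstar br xi (flat M xi)) - \sum_(b < m) tau xi b *: f b <= D)%MS) ->
  let q := fun v : 'rV[R]_n => v *m proj_mx (<<\matrix_(b < m) f b>>%MS) D in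
  (* (1) closed-loop solutions starting in d satisfy xi' + nabla^c_xi xi = 0 *)
  (forall (a c : R) (xi : R -> 'rV[R]_n), a < 0 < c ->
     (forall t, a < t < c -> derivable xi t 1) ->
     (forall t, a < t < c ->
        'D_1 xi t + sharp M (adstar br (xi t) (flat M (xi t)))
        = \sum_(b < m) tau (xi t) b *: f b) ->
     (xi 0 <= D)%MS ->
     forall t, a < t < c -> 'D_1 xi t + nabla_c nab q (xi t) (xi t) = 0) /\
  (* (2) d is geodesically invariant for nabla^c *)
  (forall (a c : R) (xi : R -> 'rV[R]_n), a < 0 < c ->
     (forall t, a < t < c -> derivable xi t 1) ->
     (forall t, a < t < c -> 'D_1 xi t + nabla_c nab q (xi t) (xi t) = 0) ->
     (xi 0 <= D)%MS ->
     forall t, a < t < c -> (xi t <= D)%MS).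
Proof.
(* The independence of the f_b only makes u^* unique. *)
move=> lie ipM levi _ DF0 DF1 tauP q; split.
- exact: closed_loop_geodesic lie ipM levi DF0 DF1 tauP.
- exact: constraint_geodesically_invariant lie ipM levi DF0 DF1.
Qed.
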